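(* Let $q$ be a prime power, let $n>1$ and $k\ge 1$ with $\gcd(n,k)=1$, and let $f(x)$ be an irreducible polynomial of degree $n$ over $\mathbb{F}_q$. Let $\alpha,\beta\in\mathbb{F}_{q^k}$ with $\alpha\neq 0$, and write $g(x)=f(\alpha x+\beta)=\sum_{i=0}^{n} g_i x^i$. Then $\mathbb{F}_q(g_0,g_1,\ldots,g_n)=\mathbb{F}_{q^k}$ if and only if $\mathbb{F}_q(\alpha,\beta)=\mathbb{F}_{q^k}$.
   Context: For elements $a_1,\dots,a_r$ of a finite extension of $\mathbb{F}_q$, $\mathbb{F}_q(a_1,\ldots,a_r)$ denotes the smallest field containing $\mathbb{F}_q$ and all $a_i$; equivalently, $\mathbb{F}_q(a_1,\dots,a_r)=\mathbb{F}_{q^k}$ (with all $a_i\in\mathbb{F}_{q^k}$) means that for every proper divisor $v$ of $k$ some $a_i\notin\mathbb{F}_{q^v}$. *)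

From HB Require Import structures.
From mathcomp Require Import all_boot all_order all_algebra all_field.
Set Implicit Arguments. Unset Strict Implicit. Unset Printing Implicit Defensive.
Import GRing.Theory.
Local Open Scope ring_scope.

Definition gen_field (F : fieldType) (L : fieldExtType F) (xs : seq L)
  : {vspace L} := <<1%VS & xs>>%VS.

(* One inclusion is clear since g has coefficients in F_q(alpha, beta).
   Conversely let K be generated by the coefficients of g and let tau be the
   Frobenius x |-> x^#|K|, which fixes K and g.  Then f is invariant under the
   substitution x |-> u x + w with u = tau(alpha)/alpha, w = tau(beta) - u beta.
   As f divides x^(q^n) - x and has no root in F_(q^k), reducing
   (u x + w)^(q^(k m)) modulo f with k m = 1 mod n forces u, w into F_q.  Hence
   tau^i(alpha) = u^i alpha, and u^n = 1 (leading coefficients) with u^k = 1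
   (tau^k = id) give u = 1; likewise n w = 0 (next-to-leading coefficients) and
   k w = 0 give w = 0, i.e. tau fixes alpha and beta. *)

From HB Require Import structures.
From mathcomp Require Import all_boot all_order all_algebra all_field.
From mathcomp Require Import ring.
Import GRing.Theory.
Local Open Scope ring_scope.
Set Implicit Arguments. Unset Strict Implicit. Unset Printing Implicit Defensive.

Lemma expr_coprime_eq1 (R : ringType) (x : R) a b :
  coprime a b -> x ^+ a = 1 -> x ^+ b = 1 -> x = 1.
Proof.
case: a => [|a]; first by rewrite /coprime gcd0n => /eqP-> _; rewrite expr1.
case: (egcdnP b (ltn0Sn a)) => ka kb bezout _; rewrite /coprime => /eqP g1 xa xb.
move/(congr1 (GRing.exp x)): bezout; rewrite g1 exprD mulnC [(kb * _)%N]mulnC.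
by rewrite !exprM xa xb !expr1n mul1r.
Qed.

Lemma mulrn_coprime_eq0 (V : zmodType) (x : V) a b :
  coprime a b -> x *+ a = 0 -> x *+ b = 0 -> x = 0.
Proof.
case: a => [|a]; first by rewrite /coprime gcd0n => /eqP-> _; rewrite mulr1n.
case: (egcdnP b (ltn0Sn a)) => ka kb bezout _; rewrite /coprime => /eqP g1 xa xb.
move/(congr1 (GRing.natmul x)): bezout; rewrite g1 mulrnDr mulnC [(kb * _)%N]mulnC.
by rewrite !mulrnA xa xb !mul0rn add0r.
Qed.

Lemma iter_rmorph_mul_fixed (R : nzRingType) (f : {rmorphism R -> R}) a u i :
  f u = u -> f a = a * u -> iter i f a = a * u ^+ i.
Proof.
move=> fu fa; elim: i => [|i /= ->]; first by rewrite mulr1.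
by rewrite rmorphM rmorphXn fu fa -mulrA -exprS.
Qed.

Lemma iter_rmorph_add_fixed (R : nzRingType) (f : {rmorphism R -> R}) b w i :
  f w = w -> f b = b + w -> iter i f b = b + w *+ i.
Proof.
move=> fw fb; elim: i => [|i /= ->]; first by rewrite addr0.
by rewrite rmorphD rmorphMn fw fb -addrA -mulrS.
Qed.

Lemma dvdp_subrXX (R : idomainType) (p a b : {poly R}) N :
  p %| a - b -> p %| a ^+ N - b ^+ N.
Proof. by move=> pab; rewrite subrXX dvdp_mulr. Qed.

Lemma dvdp_Xn_subX_expn (R : idomainType) (p : {poly R}) N m :
  p %| 'X^N - 'X -> p %| 'X^(N ^ m)%N - 'X.
Proof.
move=> pN; elim: m => [|m IHm]; first by rewrite expn0 subrr dvdp0.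
have -> : 'X^(N ^ m.+1)%N - 'X =
    ('X^N) ^+ (N ^ m)%N - 'X ^+ (N ^ m)%N + ('X^(N ^ m)%N - 'X) :> {poly R}.
  by rewrite -exprM -expnS addrA subrK.
by rewrite dvdp_add // dvdp_subrXX.
Qed.

Definition affine_poly (R : nzRingType) (a b : R) : {poly R} := 'X * a%:P + b%:P.

Section AffinePoly.
Variable R : idomainType.
Implicit Types (a b c d : R) (p : {poly R}).

Lemma comp_affine_poly a b c d :
  affine_poly a b \Po affine_poly c d = affine_poly (c * a) (d * a + b).
Proof.
rewrite /affine_poly comp_polyD comp_polyM comp_polyX !comp_polyC mulrDl -mulrA.
by rewrite -!rmorphM /= -addrA -rmorphD.
Qed.

Lemma map_affine_poly (S : nzRingType) (f : {rmorphism R -> S}) a b :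
  map_poly f (affine_poly a b) = affine_poly (f a) (f b).
Proof. by rewrite /affine_poly rmorphD rmorphM /= map_polyX !map_polyC. Qed.

Lemma size_affine_poly a b : a != 0 -> size (affine_poly a b) = 2.
Proof.
by move=> a0; rewrite /affine_poly mulrC size_MXaddC polyC_eq0 (negbTE a0) size_polyC a0.
Qed.

Lemma lead_coef_affine_poly a b : a != 0 -> lead_coef (affine_poly a b) = a.
Proof.
by move=> a0; rewrite lead_coefE size_affine_poly // /affine_poly coefD coefXM !coefC addr0.
Qed.

Lemma affine_poly_1 c : affine_poly 1 c = 'X + c%:P.
Proof. by rewrite /affine_poly mulr1. Qed.

Lemma comp_affine_poly_fixed_lead p a b :
  p != 0 -> a != 0 -> p \Po affine_poly a b = p -> a ^+ (size p).-1 = 1.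
Proof.
move=> p0 a0 /(congr1 lead_coef).
rewrite lead_coef_comp ?size_affine_poly // lead_coef_affine_poly //.
by rewrite -[RHS]mulr1 => /mulfI; apply; rewrite lead_coef_eq0.
Qed.

Lemma coef_XaddC_exp c i j : (i <= j)%N -> (('X + c%:P) ^+ i)`_j = (i == j)%:R.
Proof.
have -> : 'X + c%:P = 'X - (- c)%:P by rewrite polyCN opprK.
rewrite leq_eqVlt => /predU1P[<- | ltij].
  by have /monicP := monic_exp i (monicXsubC (- c)); rewrite lead_coefE size_exp_XsubC eqxx.
by rewrite (ltn_eqF ltij) nth_default // size_exp_XsubC.
Qed.

Lemma coef_XaddC_exp_subtop c i : (('X + c%:P) ^+ i.+1)`_i = c *+ i.+1.
Proof.
elim: i => [|i IHi]; first by rewrite expr1 coefD coefX coefC add0r.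
rewrite exprS mulrDl coefD coefXM coefCM /= IHi coef_XaddC_exp // eqxx mulr1.
by rewrite addrC -mulrS.
Qed.

Lemma coef_comp_XaddC_subtop p c m : size p = m.+2 ->
  (p \Po ('X + c%:P))`_m = p`_m + (p`_m.+1 * c) *+ m.+1.
Proof.
move=> szp; rewrite coef_comp_poly szp !big_ord_recr /= big1 ?add0r => [|i _].
  by rewrite coef_XaddC_exp_subtop coef_XaddC_exp // eqxx mulr1 mulrnAr.
by rewrite coef_XaddC_exp ?(ltn_eqF (ltn_ord i)) ?mulr0 // ltnW.
Qed.

Lemma comp_XaddC_fixed_mulrn p c : p \Po ('X + c%:P) = p -> c *+ (size p).-1 = 0.
Proof.
case szp: (size p) => [|[|m]] /= peq; rewrite ?mulr0n //.
have := congr1 (fun r : {poly R} => r`_m) peq.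
rewrite coef_comp_XaddC_subtop // -[RHS]addr0 => /addrI /eqP.
rewrite -mulrnAr mulf_eq0 => /orP[|/eqP //].
have : lead_coef p != 0 by rewrite lead_coef_eq0 -size_poly_eq0 szp.
by rewrite lead_coefE szp => /negP.
Qed.

End AffinePoly.

Lemma comp_affine_poly_eq_invariant (R : fieldType) (p : {poly R}) a b a' b' :
  a != 0 -> p \Po affine_poly a' b' = p \Po affine_poly a b ->
  p \Po affine_poly (a' / a) (b' - a' / a * b) = p.
Proof.
move=> a0 pab; have inv_ab : affine_poly a b \Po affine_poly a^-1 (- (b / a)) = 'X.
  rewrite comp_affine_poly mulVf // mulNr divfK // addNr.
  by rewrite /affine_poly polyC1 polyC0 mulr1 addr0.
rewrite -[RHS]comp_polyXr -inv_ab comp_polyA -pab -comp_polyA comp_affine_poly.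
by congr (_ \Po affine_poly _ _); field.
Qed.

Section FrobeniusPower.
Variables (F : finFieldType) (L : fieldExtType F).
Local Notation q := #|F|.

Lemma pnat_card_expn m : [pchar F].-nat (q ^ m)%N.
Proof.
have [p p_pr pF] := finPcharP F.
have -> : q = (p ^ logn p q)%N := card_pprimeChar pF.
by rewrite (eq_pnat _ (pcharf_eq pF)) -expnM pnatX (pnat_id p_pr).
Qed.

Definition frob_pow m (x : L) : L := x ^+ (q ^ m)%N.

Fact frob_pow_is_zmod_morphism m : zmod_morphism (frob_pow m).
Proof.
have qL : [pchar L].-nat (q ^ m)%N by rewrite (eq_pnat _ (pchar_lalg L)) pnat_card_expn.
move=> x y; have := exprDn_pchar (x - y) y qL.
by rewrite subrK /frob_pow => ->; rewrite addrK.
Qed.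

Fact frob_pow_is_monoid_morphism m : monoid_morphism (frob_pow m).
Proof. by split=> [|x y]; rewrite /frob_pow ?expr1n ?exprMn. Qed.

HB.instance Definition _ m := GRing.isZmodMorphism.Build L L (frob_pow m)
  (frob_pow_is_zmod_morphism m).
HB.instance Definition _ m := GRing.isMonoidMorphism.Build L L (frob_pow m)
  (frob_pow_is_monoid_morphism m).

Lemma iter_frob_pow m i x : iter i (frob_pow m) x = frob_pow (m * i) x.
Proof.
elim: i => [|i /= ->]; first by rewrite /frob_pow muln0 expr1.
by rewrite /frob_pow -exprM -expnD mulnSr.
Qed.

Lemma memv_frob_pow (K : {subfield L}) x : (x \in K) = (frob_pow (\dim K) x == x).
Proof. exact: Fermat's_little_theorem. Qed.

Lemma frob_pow_subfield (K : {subfield L}) m x :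
  x \in K -> (\dim K %| m)%N -> frob_pow m x = x.
Proof.
move=> Kx /dvdnP[j ->]; rewrite mulnC -iter_frob_pow.
by elim: j => //= j ->; apply/eqP; rewrite -memv_frob_pow.
Qed.

Lemma frob_pow_dim_fullv m (x : L) : (\dim {:L} %| m)%N -> frob_pow m x = x.
Proof. exact/frob_pow_subfield/memvf. Qed.

Lemma affine_poly_frob_pow m a b :
  affine_poly a b ^+ (q ^ m)%N = 'X^(q ^ m) * (frob_pow m a)%:P + (frob_pow m b)%:P.
Proof.
have qP : [pchar {poly L}].-nat (q ^ m)%N.
  by rewrite (eq_pnat _ (@pchar_poly L)) (eq_pnat _ (pchar_lalg L)) pnat_card_expn.
by rewrite exprDn_pchar // exprMn -!rmorphXn.
Qed.

End FrobeniusPower.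

Lemma dim_Fadjoin_root_irreducible (F : fieldType) (E : fieldExtType F)
    (f : {poly F}) (t : E) :
  irreducible_poly f -> root (map_poly (in_alg E) f) t ->
  \dim <<1; t>>%VS = (size f).-1.
Proof.
move=> irr_f ft0; have /polyOver1P[h Dh] := minPolyOver 1 t.
have szh : size h = (adjoin_degree 1 t).+1 by rewrite -size_minPoly Dh size_map_poly.
have /eqp_size : h %= f.
  apply: irr_f.2; first by rewrite szh.
  by rewrite -(dvdp_map (in_alg E)) -Dh minPoly_dvdp ?alg_polyOver.
by rewrite szh dim_Fadjoin dimv1 muln1 => <-.
Qed.

Lemma irreducible_dvdp_Xq_subX (F : finFieldType) (f : {poly F}) :
  irreducible_poly f -> f %| 'X^(#|F| ^ (size f).-1)%N - 'X.
Proof.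
move=> irr_f; have f0 : f != 0 by rewrite -size_poly_gt0 ltnW // irr_f.1.
have [M [rs Drs _]] := FinSplittingFieldFor f0.
set fM := map_poly _ f in Drs.
have [t rs_t] : exists t, t \in rs.
  case: rs Drs => [|t rs] Drs; last by exists t; rewrite mem_head.
  move: irr_f.1; rewrite -(size_map_poly (in_alg M)) (eqp_size Drs).
  by rewrite big_nil size_poly1.
have ft0 : root fM t by rewrite (eqp_root Drs) root_prod_XsubC.
have tq : t ^+ (#|F| ^ (size f).-1)%N = t.
  apply/eqP; rewrite -(dim_Fadjoin_root_irreducible irr_f ft0).
  by rewrite -(Fermat's_little_theorem <<1; t>>%AS) memv_adjoin.
set P := 'X^_ - 'X; have gcd0 : gcdp f P != 0 by rewrite gcdp_eq0 negb_and f0.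
have gcd_t0 : root (map_poly (in_alg M) (gcdp f P)) t.
  rewrite gcdp_map root_gcd ft0 /= rmorphB /= map_polyXn map_polyX.
  by rewrite rootE !hornerE tq subrr.
have /eqp_dvdl <- : gcdp f P %= f; last exact: dvdp_gcdr.
apply: irr_f.2; last exact: dvdp_gcdl.
rewrite -(size_map_poly (in_alg M)) neq_ltn (root_size_gt1 _ gcd_t0) ?orbT //.
by rewrite map_poly_eq0.
Qed.

Lemma polyOver_Fadjoin_coefs (F : fieldType) (L : fieldExtType F) (p : {poly L}) :
  p \is a polyOver <<1 & [seq p`_i | i <- iota 0 (size p)]>>%VS.
Proof.
apply/polyOverP => i; have [ltip | leip] := ltnP i (size p).
  by apply: seqv_sub_adjoin; apply/mapP; exists i; rewrite ?mem_iota.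
by rewrite nth_default ?mem0v.
Qed.

Section CoprimeDegree.
Variables (F : finFieldType) (L : fieldExtType F) (n : nat) (f : {poly F}).
Hypotheses (n_gt1 : (1 < n)%N) (coprime_nk : coprime n (\dim {:L})).
Hypotheses (irr_f : irreducible_poly f) (size_f : size f = n.+1).
Local Notation q := #|F|.
Local Notation k := (\dim {:L}).
Local Notation fL := (map_poly (in_alg L) f).

Lemma size_fL : size fL = n.+1.
Proof. by rewrite size_map_poly. Qed.

Lemma fL_has_no_root c : ~~ root fL c.
Proof.
apply/negP => fc0; have := field_dimS (subvf <<1; c>>%AS).
rewrite (dim_Fadjoin_root_irreducible irr_f fc0) size_f => /gcdn_idPl /= gcd_n.
by move: n_gt1; rewrite -gcd_n (eqP coprime_nk).
Qed.

Lemma fL_dvdp_Xqn_subX m : fL %| 'X^(q ^ (n * m)) - 'X.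
Proof.
rewrite expnM; apply: dvdp_Xn_subX_expn.
have := irreducible_dvdp_Xq_subX irr_f; rewrite size_f -(dvdp_map (in_alg L)).
by rewrite rmorphB /= map_polyXn map_polyX.
Qed.

Lemma fL_dvdp_Xq_affine a b : fL %| 'X^q * a%:P + b%:P -> a = 0 /\ b = 0.
Proof.
have small_dvd (p : {poly L}) : p != 0 -> fL %| p -> (n < size p)%N.
  by move=> p0 /(dvdp_leq p0); rewrite size_fL.
have [-> | a0] := eqVneq a 0.
  rewrite mulr0 add0r => fb; split=> //; apply/eqP/negP => /negP b0.
  have := small_dvd b%:P; rewrite polyC_eq0 size_polyC b0 => /(_ isT fb).
  by rewrite ltnNge ltnW.
pose c := frob_pow (k.-1) (b / a).
have cq : frob_pow 1 c = b / a.
  rewrite /c /frob_pow -exprM -expnSr prednK ?adim_gt0 //.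
  exact: frob_pow_dim_fullv.
have -> : 'X^q * a%:P + b%:P = a *: affine_poly 1 c ^+ (q ^ 1)%N :> {poly L}.
  rewrite affine_poly_frob_pow rmorph1 cq expn1 scalerDr -!mul_polyC polyC1 mulr1.
  by rewrite -polyCM mulrC; congr (_ + _%:P); rewrite mulrC divfK.
rewrite dvdpZr // => fXc; exfalso.
have : coprimep fL (affine_poly 1 c ^+ (q ^ 1)%N).
  have -> : affine_poly 1 c = 'X - (- c)%:P by rewrite affine_poly_1 polyCN opprK.
  by rewrite coprimep_expr // coprimep_XsubC fL_has_no_root.
move/(coprimep_dvdl fXc); rewrite coprimep_def gcdpp size_fL.
by apply/negP; rewrite eqSS; case: n n_gt1.
Qed.

Lemma fL_affine_invariant_mem1v u w :
  fL \Po affine_poly u w = fL -> u \in 1%VS /\ w \in 1%VS.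
Proof.
set s := affine_poly u w => fs.
have [km kn bezout _] := egcdnP n (adim_gt0 {:L}%AS).
rewrite gcdnC (eqP coprime_nk) in bezout.
have fL_s m : fL %| s ^+ (q ^ (n * m)) - s.
  have := dvdp_comp_poly s (fL_dvdp_Xqn_subX m).
  by rewrite fs comp_polyB comp_Xn_poly comp_polyX.
have qk : (q ^ (km * k) = (q ^ (n * kn)) ^ 1 * q)%N.
  by rewrite expn1 bezout mulnC expnD expn1.
have sk : s ^+ (q ^ (km * k)) = 'X^(q ^ (km * k)) * u%:P + w%:P.
  by rewrite affine_poly_frob_pow !frob_pow_dim_fullv ?dvdn_mull.
have s1 := affine_poly_frob_pow 1 u w; rewrite -/s expn1 in s1.
have fL_sq : fL %| s ^+ (q ^ (km * k)) - s ^+ q.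
  by rewrite qk exprM dvdp_subrXX // expn1 fL_s.
have fL_Xq : fL %| 'X^(q ^ (km * k)) - 'X^q.
  by rewrite qk exprM dvdp_subrXX // expn1 fL_dvdp_Xqn_subX.
(* Modulo fL: 'X^q u + w = s ^+ (q ^ (km * k)) = s ^+ q = 'X^q u^q + w^q. *)
have [/eqP u1 /eqP w1] : u - frob_pow 1 u = 0 /\ w - frob_pow 1 w = 0.
  apply: fL_dvdp_Xq_affine.
  have -> : 'X^q * (u - frob_pow 1 u)%:P + (w - frob_pow 1 w)%:P =
      (s ^+ (q ^ (km * k)) - s ^+ q) - ('X^(q ^ (km * k)) - 'X^q) * u%:P.
    by rewrite sk s1 !rmorphB /=; ring.
  by rewrite dvdp_sub ?dvdp_mulr.
rewrite subr_eq0 eq_sym in u1; rewrite subr_eq0 eq_sym in w1.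
by rewrite !memv_frob_pow dimv1 u1 w1.
Qed.

Lemma fL_frob_pow_affine_fixed e a b : a != 0 ->
  fL \Po affine_poly (frob_pow e a) (frob_pow e b) = fL \Po affine_poly a b ->
  frob_pow e a = a /\ frob_pow e b = b.
Proof.
move=> a0 fab; have fLuw := comp_affine_poly_eq_invariant a0 fab.
set u := frob_pow e a / a in fLuw; set w := frob_pow e b - u * b in fLuw.
have [u1 w1] := fL_affine_invariant_mem1v fLuw.
have fix1 (x : L) : x \in 1%VS -> frob_pow e x = x.
  by move=> x1; apply: frob_pow_subfield x1 _; rewrite dimv1 dvd1n.
have period (x : L) : iter k (frob_pow e) x = x.
  by rewrite iter_frob_pow frob_pow_dim_fullv ?dvdn_mull.
have a_orbit : frob_pow e a = a * u by rewrite mulrC divfK.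
have uk : u ^+ k = 1.
  apply: (mulfI a0); rewrite mulr1 -(iter_rmorph_mul_fixed _ (fix1 _ u1) a_orbit).
  exact: period.
have un : u ^+ n = 1.
  have fL0 : fL != 0 by rewrite -size_poly_eq0 size_fL.
  have u0 : u != 0 by rewrite mulf_neq0 ?invr_eq0 // fmorph_eq0.
  by have := comp_affine_poly_fixed_lead fL0 u0 fLuw; rewrite size_fL.
have u_1 : u = 1 := expr_coprime_eq1 coprime_nk un uk.
have b_orbit : frob_pow e b = b + w by rewrite /w u_1 mul1r addrC subrK.
have wk : w *+ k = 0.
  apply: (addrI b); rewrite addr0 -(iter_rmorph_add_fixed _ (fix1 _ w1) b_orbit).
  exact: period.
have wn : w *+ n = 0.
  by move: fLuw; rewrite u_1 affine_poly_1 => /comp_XaddC_fixed_mulrn; rewrite size_fL.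
have w_0 : w = 0 := mulrn_coprime_eq0 coprime_nk wn wk.
by rewrite a_orbit b_orbit u_1 w_0 mulr1 addr0.
Qed.

Lemma fL_comp_affine_polyOver (K : {subfield L}) a b : a != 0 ->
  fL \Po affine_poly a b \is a polyOver K -> a \in K /\ b \in K.
Proof.
move=> a0 gK; set e := \dim K.
have fixK p : p \is a polyOver K -> map_poly (frob_pow e) p = p.
  move=> /polyOverP pK; apply/polyP => i.
  by rewrite coef_map /=; apply: frob_pow_subfield (pK i) (dvdnn e).
have fLK : fL \is a polyOver K := polyOverS (subvP (sub1v K)) (alg_polyOver _ f).
move: (fixK _ gK); rewrite map_comp_poly map_affine_poly fixK //.
by move=> /(fL_frob_pow_affine_fixed a0) [fa fb]; rewrite !memv_frob_pow fa fb.
Qed.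

End CoprimeDegree.

Theorem mainTheorem4 (F : finFieldType) (L : fieldExtType F)
    (n : nat) (f : {poly F}) (alpha beta : L) :
  (1 < n)%N -> coprime n (\dim {:L}) ->
  irreducible_poly f -> size f = n.+1 ->
  alpha != 0 ->
  let g := (map_poly (in_alg L) f) \Po ('X * alpha%:P + beta%:P) in
  (gen_field [seq g`_i | i <- iota 0 n.+1] = fullv)
    <-> (gen_field [:: alpha; beta] = fullv).
Proof.
move=> n_gt1 coprime_nk irr_f size_f alpha0 g.
have size_g : size g = n.+1 by rewrite size_comp_poly2 ?size_affine_poly // size_map_poly.
rewrite /gen_field -size_g; split=> gen; apply/eqP; rewrite eqEsubv subvf /= -gen.
  apply/Fadjoin_seqP; split=> [|_ /mapP[i _ ->]]; first exact: sub1v.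
  apply/polyOverP; apply: polyOver_comp; first exact: alg_polyOver.
  by rewrite rpredD ?rpredM ?polyOverX ?polyOverC // seqv_sub_adjoin ?inE ?eqxx ?orbT.
have [] := fL_comp_affine_polyOver n_gt1 coprime_nk irr_f size_f (K := <<1 & _>>%AS)
  alpha0 (polyOver_Fadjoin_coefs g).
by move=> Ka Kb; apply/Fadjoin_seqP; split=> [|x]; rewrite ?sub1v // !inE => /orP[] /eqP->.
Qed.
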